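(* Let $n\ge3$. Then the big height of $I(L_n^2)\subseteq\Bbbk[x_1,\dots,x_n]$ equals $n-\left\lceil\frac n5\right\rceil$.
   Context: $L_n^2$ is the graph on $\{1,\dots,n\}$ with edges $\{i,i+1\}$ ($1\le i\le n-1$) and $\{i,i+2\}$ ($1\le i\le n-2$). $I(G)=\langle x_ix_j:\{i,j\}\in E(G)\rangle$, $\Bbbk$ a field. The big height of an ideal is the maximum height of its minimal prime ideals. *)

From HB Require Import structures.
From mathcomp Require Import all_boot all_order all_algebra.
From mathcomp Require Import mpoly.
Set Implicit Arguments. Unset Strict Implicit. Unset Printing Implicit Defensive.
Import GRing.Theory.
Local Open Scope ring_scope.

Section CommAlg.
Variable R : comNzRingType.

Definition rsubset (I J : R -> Prop) := forall x, I x -> J x.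
Definition rsubsetneq (I J : R -> Prop) := rsubset I J /\ exists x, J x /\ ~ I x.
Definition rseteq (I J : R -> Prop) := forall x, I x <-> J x.

Definition is_ideal (I : R -> Prop) : Prop :=
  I 0 /\ (forall a b, I a -> I b -> I (a + b)) /\ (forall r a, I a -> I (r * a)).

Definition ideal_gen (G : R -> Prop) : R -> Prop :=
  fun x => forall J, is_ideal J -> rsubset G J -> J x.

Definition is_prime (P : R -> Prop) : Prop :=
  is_ideal P /\ ~ P 1 /\ (forall a b, P (a * b) -> P a \/ P b).

Definition is_minimal_prime (I P : R -> Prop) : Prop :=
  is_prime P /\ rsubset I P /\
  (forall Q, is_prime Q -> rsubset I Q -> rsubset Q P -> rseteq Q P).

Definition prime_chain_to (P : R -> Prop) (m : nat) : Prop :=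
  exists c : nat -> (R -> Prop),
    (forall i, (i <= m)%N -> is_prime (c i)) /\
    (forall i, (i < m)%N -> rsubsetneq (c i) (c i.+1)) /\
    rseteq (c m) P.

Definition height_eq (P : R -> Prop) (h : nat) : Prop :=
  prime_chain_to P h /\ (forall m, prime_chain_to P m -> (m <= h)%N).

Definition bigheight_eq (I : R -> Prop) (h : nat) : Prop :=
  (exists P, is_minimal_prime I P /\ height_eq P h) /\
  (forall P m, is_minimal_prime I P -> prime_chain_to P m -> (m <= h)%N).

End CommAlg.

(* The graph L_n^2 on vertices 'I_n (vertex i <-> x_{i+1}): edges {i,i+1}, {i,i+2}. *)
Definition L2_edge (n : nat) (i j : 'I_n) : Prop :=
  (val j = (val i).+1)%N \/ (val j = (val i).+2)%N.

Arguments L2_edge : clear implicits.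
Definition edge_ideal_L2 (k : fieldType) (n : nat) : {mpoly k[n]} -> Prop :=
  ideal_gen (fun p : {mpoly k[n]} =>
    exists i j : 'I_n, L2_edge n i j /\ p = 'X_i * 'X_j).
Arguments edge_ideal_L2 k n : clear implicits.

From HB Require Import structures.
From mathcomp Require Import all_boot all_order all_algebra.
From mathcomp Require Import mpoly.
From mathcomp Require Import zify ring.
From Stdlib Require Import ClassicalEpsilon Classical.
Set Implicit Arguments. Unset Strict Implicit. Unset Printing Implicit Defensive.
Import GRing.Theory.

(* A minimal prime of the edge ideal contains, with every edge x_i x_j, one of x_i, x_j, so
   it is generated by the variables of a minimal vertex cover C.  The prime (x_i : i in C) has
   height #|C|: along a prime chain P_0 < ... < P_m, a set S of variables algebraically
   independent modulo P_m can be enlarged by one variable at each step down.  Indeed, if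
   P < Q and every remaining x_j satisfied a nonzero relation over k[x_S] modulo P, then R/P
   would be integral over k[x_S][1/c] for the product c of the leading coefficients of these
   relations; a power of c times an element of Q \ P would then divide in R/P a nonzero
   element of k[x_S], forcing that element into Q.  Hence the big height is the largest size
   of a minimal vertex cover of L_n^2.  Its complement is an independent dominating set, and a
   vertex dominates at most five vertices, so the size is at most n - ceil(n/5); equality holds
   for the complement of {i | i = 2 mod 5}, completed by the last vertex when n = 1, 2 mod 5. *)

Local Open Scope ring_scope.

Section IdealTheory.
Variables (R : comNzRingType) (J : R -> Prop).
Hypothesis idJ : is_ideal J.

Lemma is_ideal0 : J 0. Proof. by case: idJ. Qed.
Lemma is_idealD a b : J a -> J b -> J (a + b). Proof. by case: idJ => _ [+ _]; apply. Qed.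
Lemma is_idealM r a : J a -> J (r * a). Proof. by case: idJ => _ [_]; apply. Qed.
Lemma is_idealMr r a : J a -> J (a * r). Proof. by rewrite mulrC; apply: is_idealM. Qed.

End IdealTheory.

Definition propb (A : Prop) : bool := if excluded_middle_informative A then true else false.

Lemma propbP (A : Prop) : reflect A (propb A).
Proof. by rewrite /propb; case: excluded_middle_informative => h; constructor. Qed.

Section PrimeQuotient.
Variables (R : comNzRingType) (P : R -> Prop).
Hypothesis primeP : is_prime P.
Local Open Scope quotient_scope.

Definition primeb (x : R) : bool := propb (P x).

Lemma primeb_idealr_closed : idealr_closed primeb.
Proof.
case: primeP => [[P0 [PD PM]] [P1 _]]; split; [exact/propbP | exact/propbP |].
by move=> a u v /propbP Pu /propbP Pv; apply/propbP; apply: PD => //; apply: PM.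
Qed.

Lemma primeb_prime_idealr_closed : prime_idealr_closed primeb.
Proof.
case: primeP => _ [_ PM] u v /propbP /PM [] Pw; apply/orP; [left | right]; exact/propbP.
Qed.

HB.instance Definition _ := isIdealr.Build R primeb primeb_idealr_closed.
HB.instance Definition _ :=
  isPrimeIdealrClosed.Build R primeb primeb_prime_idealr_closed.

Definition quot_prime := {ideal_quot (primeb : prime_idealr R)}.
Definition pi_prime : {rmorphism R -> quot_prime} := \pi.

Lemma pi_prime_eq0 x : pi_prime x = 0 <-> P x.
Proof.
rewrite -(rmorph0 pi_prime) /pi_prime /=; split => [/eqP | Px].
  by rewrite piE /Quotient.equiv subr0 => /propbP.
by apply/eqP; rewrite piE /Quotient.equiv subr0; apply/propbP.
Qed.

Lemma pi_prime_surj (z : quot_prime) : exists x, z = pi_prime x.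
Proof. by exists (repr z); rewrite /pi_prime /= reprK. Qed.

Lemma quot_prime_domain : GRing.integral_domain_axiom quot_prime.
Proof. exact: Quotient.rquot_IdomainAxiom. Qed.

End PrimeQuotient.

Lemma integral_dvd_image (A B : comNzRingType) (f : {rmorphism A -> B}) (y : B) :
  GRing.integral_domain_axiom B -> y != 0 -> integralOver f y ->
  exists2 a, f a != 0 & exists r, f a = y * r.
Proof.
move=> domB y_neq0 [p]; have [s] := ubnP (size p); elim: s p => // s IH p.
rewrite ltnS => size_p mon_p; set q := drop_poly 1 p.
have p_eq : p = q * 'X + (p`_0)%:P.
  rewrite -[p in LHS](poly_take_drop 1) (size1_polyC (size_take_poly 1 p)).
  by rewrite coef_take_poly addrC.
rewrite /root {1}p_eq rmorphD rmorphM /= map_polyX map_polyC /= hornerD hornerMX hornerC.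
move=> /eqP root_p; have [f0|f0] := eqVneq (f p`_0) 0; last first.
  exists p`_0 => //; exists (- (map_poly f q).[y]).
  by apply/eqP; rewrite mulrN mulrC -addr_eq0 addrC root_p.
have size_p2 : (1 < size p)%N.
  rewrite ltnNge; apply/negP => /size1_polyC p_const.
  have p0_1 : p`_0 = 1 by rewrite -(monicP mon_p) [in RHS]p_const lead_coefC.
  by move: f0; rewrite p0_1 rmorph1 => /eqP; rewrite oner_eq0.
apply: (IH q); first by rewrite size_drop_poly; lia.
  apply/monicP; rewrite -[RHS](monicP mon_p) !lead_coefE size_drop_poly coef_drop_poly.
  by congr p`_ _; lia.
by move: root_p; rewrite f0 addr0 => /domB /orP [//|]; rewrite (negbTE y_neq0).
Qed.

Section MonicRescale.
Variable A : comNzRingType.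
Implicit Types G : {poly A}.

(* With a := lead_coef G and d := deg G, this is the monic M with M(a x) = a^(d-1) G(x). *)
Definition monic_rescale G : {poly A} :=
  \poly_(t < size G)
    (if (t < (size G).-1)%N then G`_t * lead_coef G ^+ ((size G).-2 - t) else 1).

Lemma monic_rescale_monic G : (0 < size G)%N -> monic_rescale G \is monic.
Proof.
move=> G_neq0; have size_resc : size (monic_rescale G) = size G.
  by rewrite size_poly_eq // ltnn oner_neq0.
by rewrite monicE lead_coefE size_resc coef_poly ltn_predL G_neq0 ltnn.
Qed.

Lemma horner_monic_rescale G x : (1 < size G)%N ->
  (monic_rescale G).[lead_coef G * x] = lead_coef G ^+ (size G).-2 * G.[x].
Proof.
move=> size_G; set a := lead_coef G; set d := (size G).-1.
have sizeE : size G = d.+1 by rewrite prednK // ltnW.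
have d_gt0 : (0 < d)%N by rewrite -ltnS -sizeE.
rewrite horner_poly horner_coef sizeE -/d !big_ord_recr /= ltnn mul1r mulrDr mulr_sumr.
congr (_ + _).
  apply: eq_bigr => t _; have aXe : a ^+ (d.-1 - t) * a ^+ t = a ^+ d.-1.
    by rewrite -exprD subnK // -ltnS prednK.
  by rewrite ltn_ord exprMn -/a -aXe; ring.
have -> : G`_d = a by rewrite /a lead_coefE.
by rewrite exprMn mulrA -exprSr prednK.
Qed.

Lemma map_monic_rescale (f : {rmorphism A -> A}) G :
  (forall t, f G`_t = G`_t) -> map_poly f (monic_rescale G) = monic_rescale G.
Proof.
move=> f_coef; apply/polyP => t; rewrite coef_map coef_poly /=.
case: ifP => _; last exact: rmorph0.
by case: ifP => _; rewrite ?rmorph1 // rmorphM rmorphXn f_coef lead_coefE f_coef.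
Qed.

End MonicRescale.

Section RestrictVariables.
Variables (k : fieldType) (n : nat).
Local Notation R := {mpoly k[n]}.
Implicit Types (S T : {set 'I_n}) (p : R).

Lemma eq_rmorph_mpoly (A : nzRingType) (f g : {rmorphism R -> A}) :
  (forall c, f c%:MP = g c%:MP) -> (forall i, f 'X_i = g 'X_i) -> f =1 g.
Proof.
move=> eqC eqX p; rewrite (mpolyE p) !rmorph_sum; apply: eq_bigr => m _.
rewrite -mul_mpolyC !rmorphM eqC mpolyXE_id !rmorph_prod; congr (_ * _).
by apply: eq_bigr => i _; rewrite !rmorphXn eqX.
Qed.

Definition restrX (T : {set 'I_n}) : {rmorphism R -> R} :=
  mmap (@mpolyC n k) (fun i => if i \in T then 'X_i else 0).

Lemma restrXC T c : restrX T c%:MP = c%:MP.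
Proof. exact: mmapC. Qed.

Lemma restrXX T i : restrX T 'X_i = if i \in T then 'X_i else 0.
Proof. exact: (etrans (mmapX _ _ _) (mmap1U _ _)). Qed.

Lemma restrX_sub S T p : S \subset T -> restrX T (restrX S p) = restrX S p.
Proof.
move=> sST; apply: (@eq_rmorph_mpoly _ (restrX T \o restrX S)) => [c|i] /=.
  by rewrite !restrXC.
by rewrite restrXX; case: ifP => [/(subsetP sST) iT|_]; rewrite ?restrXX ?iT ?rmorph0.
Qed.

Lemma restrX_id T p : restrX T (restrX T p) = restrX T p.
Proof. exact: restrX_sub. Qed.

Lemma restrX_monomial T m :
  restrX T 'X_[m] = if [forall i, (m i != 0)%N ==> (i \in T)] then 'X_[m] else 0.
Proof.
rewrite mpolyXE_id rmorph_prod; case: ifP => [/forallP mT|/negbT].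
  apply: eq_bigr => i _; rewrite rmorphXn restrXX; case: ifP => // iT.
  by have := mT i; rewrite iT implybF negbK => /eqP ->; rewrite !expr0.
rewrite negb_forall => /existsP [i]; rewrite negb_imply => /andP [mi iT].
by rewrite (bigD1 i) //= rmorphXn restrXX (negbTE iT) expr0n (negbTE mi) mul0r.
Qed.

Lemma idealB_restrX T (J : R -> Prop) : is_ideal J ->
  (forall i, i \notin T -> J 'X_i) -> forall p, J (p - restrX T p).
Proof.
move=> idJ JX; elim/mpolyind => [|c m p _ _ IH]; first by rewrite rmorph0 subr0; apply: is_ideal0.
rewrite rmorphD opprD addrACA; apply: is_idealD => //.
rewrite -mul_mpolyC rmorphM restrXC -mulrBr; apply: is_idealM => //.
rewrite restrX_monomial; case: ifP => [_|/negbT]; first by rewrite subrr; apply: is_ideal0.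
rewrite subr0 negb_forall => /existsP [i]; rewrite negb_imply => /andP [mi iT].
have -> : m = (U_(i) + (m - U_(i)))%MM by rewrite addmC submK // lep1mP.
by rewrite mpolyXD; apply: is_idealMr => //; apply: JX.
Qed.

Definition alg_indep_mod (P : R -> Prop) (S : {set 'I_n}) :=
  forall p, restrX S p = p -> P p -> p = 0.

(* [univarX S j p] is [restrX (j |: S) p] read as a polynomial in [x_j] over k[x_S]. *)
Definition univarX (S : {set 'I_n}) (j : 'I_n) : {rmorphism R -> {poly R}} :=
  mmap (polyC \o @mpolyC n k)
    (fun i => if i == j then 'X else if i \in S then ('X_i)%:P else 0).

Lemma univarXC S j c : univarX S j c%:MP = (c%:MP)%:P.
Proof. exact: mmapC. Qed.

Lemma univarXX S j i :
  univarX S j 'X_i = if i == j then 'X else if i \in S then ('X_i)%:P else 0.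
Proof. exact: (etrans (mmapX _ _ _) (mmap1U _ _)). Qed.

Lemma horner_univarX S j p : (univarX S j p).['X_j] = restrX (j |: S) p.
Proof.
apply: (@eq_rmorph_mpoly _ (horner_eval 'X_j \o univarX S j)) => [c|i] /=.
  by rewrite /horner_eval univarXC restrXC hornerC.
rewrite /horner_eval univarXX restrXX in_setU1.
by case: eqP => [->|_]; [rewrite hornerX | case: ifP; rewrite hornerC].
Qed.

Lemma restrX_coef_univarX S j p t : restrX S (univarX S j p)`_t = (univarX S j p)`_t.
Proof.
suff fix_coef : map_poly (restrX S) \o univarX S j =1 univarX S j.
  by rewrite -coef_map -[in RHS]fix_coef.
apply: eq_rmorph_mpoly => [c|i] /=; first by rewrite univarXC map_polyC /= restrXC.
rewrite univarXX; case: eqP => _; first by rewrite map_polyX.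
by case: ifP => iS; rewrite map_polyC /= ?restrXX ?iS ?rmorph0.
Qed.

End RestrictVariables.
Arguments restrX {k n}.
Arguments univarX {k n}.

Section IntegralOverVars.
Variables (k : fieldType) (n : nat).
Local Notation R := {mpoly k[n]}.
Variables (P : R -> Prop) (primeP : is_prime P) (S : {set 'I_n}).
Hypothesis indepP : alg_indep_mod P S.
Variable F : 'I_n -> R.
Hypothesis F_spec : forall j, j \notin S ->
  [/\ restrX (j |: S) (F j) = F j, P (F j) & F j != 0].

Local Notation pi := (pi_prime primeP).
Let psi : {rmorphism R -> quot_prime primeP} := pi \o restrX S.
Let G j := univarX S j (F j).
Let lc j := lead_coef (G j).

Let horner_G j : j \notin S -> (G j).['X_j] = F j.
Proof. by move=> /F_spec [F_fix _ _]; rewrite horner_univarX F_fix. Qed.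

Let size_G j : j \notin S -> (1 < size (G j))%N.
Proof.
move=> jS; rewrite ltnNge; apply/negP => /size1_polyC G_const.
have := horner_G jS; rewrite G_const hornerC => G0_eq.
case: (F_spec jS) => _ PF /eqP; apply; apply: indepP => //.
by rewrite -G0_eq restrX_coef_univarX.
Qed.

Let restrX_lc j : restrX S (lc j) = lc j.
Proof. by rewrite /lc lead_coefE restrX_coef_univarX. Qed.

Let lc_neq0 j : j \notin S -> lc j != 0.
Proof. by move=> /size_G; rewrite /lc lead_coef_eq0 -size_poly_eq0; case: size. Qed.

Let integral_fixed x : restrX S x = x -> integralOver psi (pi x).
Proof. by move=> x_fix; rewrite -x_fix; apply: integral_id. Qed.

Let integral_lcX j : j \notin S -> integralOver psi (pi (lc j * 'X_j)).
Proof.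
move=> jS; pose M := monic_rescale (G j).
have M_fix : map_poly (restrX S) M = M.
  by apply: map_monic_rescale => t; apply: restrX_coef_univarX.
exists M; first by apply: monic_rescale_monic; apply: ltnW (size_G jS).
have -> : map_poly psi M = map_poly pi M by rewrite -[in RHS]M_fix -map_poly_comp.
rewrite /root horner_map horner_monic_rescale ?size_G // horner_G //.
by apply/eqP/pi_prime_eq0; case: (F_spec jS) => _ PF _; apply: is_idealM; case: primeP.
Qed.

Let c := \prod_(j | j \notin S) lc j.

Let restrX_c : restrX S c = c.
Proof. by rewrite rmorph_prod; apply: eq_bigr => j _; apply: restrX_lc. Qed.

Let c_neq0 : c != 0.
Proof. by apply/prodf_neq0 => j; apply: lc_neq0. Qed.

(* [z] is integral over k[x_S][1/c]. *)
Let integral_loc z := exists N, integralOver psi (pi c ^+ N * z).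

Let integral_locD z w : integral_loc z -> integral_loc w -> integral_loc (z + w).
Proof.
move=> [N int_z] [M int_w]; exists (N + M)%N.
have -> : pi c ^+ (N + M) * (z + w) =
    pi c ^+ M * (pi c ^+ N * z) + pi c ^+ N * (pi c ^+ M * w).
  by rewrite exprD mulrDr !mulrA [pi c ^+ M * _]mulrC.
have int_cX m : integralOver psi (pi c ^+ m).
  by rewrite -rmorphXn; apply: integral_fixed; rewrite rmorphXn restrX_c.
exact: integral_add (integral_mul (int_cX M) int_z) (integral_mul (int_cX N) int_w).
Qed.

Let integral_locM z w : integral_loc z -> integral_loc w -> integral_loc (z * w).
Proof.
move=> [N int_z] [M int_w]; exists (N + M)%N.
rewrite exprD mulrACA; exact: integral_mul int_z int_w.
Qed.

Let integral_loc_fixed x : restrX S x = x -> integral_loc (pi x).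
Proof. by move=> x_fix; exists 0%N; rewrite expr0 mul1r; apply: integral_fixed. Qed.

Let integral_locX i : integral_loc (pi 'X_i).
Proof.
case: (boolP (i \in S)) => iS; first by apply: integral_loc_fixed; rewrite restrXX iS.
exists 1%N; rewrite expr1 -rmorphM /c (bigD1 i) //= mulrAC rmorphM.
apply: integral_mul; first exact: integral_lcX.
by apply: integral_fixed; rewrite rmorph_prod; apply: eq_bigr => j _; apply: restrX_lc.
Qed.

Let integral_loc_pi p : integral_loc (pi p).
Proof.
have int_1 : integral_loc 1.
  by rewrite -(rmorph1 pi); apply: integral_loc_fixed; rewrite rmorph1.
elim/mpolyind: p => [|a m p _ _ IH]; first by apply: integral_loc_fixed; rewrite rmorph0.
rewrite rmorphD; apply: integral_locD IH.
rewrite -mul_mpolyC rmorphM; apply: integral_locM.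
  by apply: integral_loc_fixed; rewrite restrXC.
rewrite mpolyXE_id rmorph_prod; apply: (big_ind integral_loc int_1 integral_locM) => i _.
rewrite rmorphXn; elim: (m i) => [|e IHe]; first by rewrite expr0.
by rewrite exprS; apply: integral_locM IHe; apply: integral_locX.
Qed.

Lemma exists_integral_denominator :
  exists2 c, restrX S c = c /\ c != 0 &
    forall p, exists N, integralOver psi (pi (c ^+ N * p)).
Proof.
exists c; first by split; [apply: restrX_c | apply: c_neq0].
by move=> p; have [N int_p] := integral_loc_pi p; exists N; rewrite rmorphM rmorphXn.
Qed.

End IntegralOverVars.

Section Dimension.
Variables (k : fieldType) (n : nat).
Local Notation R := {mpoly k[n]}.

Lemma alg_indep_mod_extend (P Q : R -> Prop) (S : {set 'I_n}) :
  is_prime P -> is_prime Q -> rsubsetneq P Q -> alg_indep_mod Q S ->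
  exists2 j, j \notin S & alg_indep_mod P (j |: S).
Proof.
move=> primeP primeQ [PQ [q [Qq Pq]]] indepQ.
have indepP : alg_indep_mod P S by move=> p p_fix /PQ; apply: indepQ.
apply: NNPP => no_j.
have F_ex j : exists F, j \notin S -> [/\ restrX (j |: S) F = F, P F & F != 0].
  case: (boolP (j \in S)) => jS; first by exists 0.
  apply: NNPP => no_F; apply: no_j; exists j => // p p_fix Pp.
  by apply: NNPP => p_neq0; apply: no_F; exists p => _; split => //; apply/eqP.
pose F j := proj1_sig (constructive_indefinite_description _ (F_ex j)).
have F_spec j : j \notin S -> [/\ restrX (j |: S) (F j) = F j, P (F j) & F j != 0].
  exact: proj2_sig (constructive_indefinite_description _ (F_ex j)).
have [c [c_fix c_neq0] int_c] := exists_integral_denominator primeP indepP F_spec.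
have [N int_y] := int_c q.
have cN_fix : restrX S (c ^+ N) = c ^+ N by rewrite rmorphXn c_fix.
have Pc : ~ P (c ^+ N).
  by move=> /(indepP _ cN_fix) /eqP; rewrite expf_eq0 (negbTE c_neq0) andbF.
have y_neq0 : pi_prime primeP (c ^+ N * q) != 0.
  by have [_ [_ P_mul]] := primeP; apply/eqP => /pi_prime_eq0 /P_mul [].
pose psi : {rmorphism R -> quot_prime primeP} := pi_prime primeP \o restrX S.
have [a psi_a [r psi_a_eq]] :=
  integral_dvd_image (f := psi) (quot_prime_domain (primeP := primeP)) y_neq0 int_y.
have [r0 r_eq] := pi_prime_surj r.
have [idQ _] := primeQ.
have Pdiff : P (restrX S a - c ^+ N * q * r0).
  by apply/pi_prime_eq0; rewrite rmorphB rmorphM -r_eq -psi_a_eq subrr.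
have Qa : Q (restrX S a).
  rewrite -(subrK (c ^+ N * q * r0) (restrX S a)).
  by apply: (is_idealD idQ (PQ _ Pdiff)); apply: (is_idealMr idQ); apply: (is_idealM idQ).
by move: psi_a; rewrite /= (indepQ _ (restrX_id _ _) Qa) rmorph0 eqxx.
Qed.

Lemma prime_chain_card (T : {set 'I_n}) (m : nat) (c : nat -> R -> Prop) :
  (forall i, (i <= m)%N -> is_prime (c i)) ->
  (forall i, (i < m)%N -> rsubsetneq (c i) (c i.+1)) ->
  alg_indep_mod (c m) T -> (#|T| + m <= n)%N.
Proof.
elim: m T => [|m IH] T c_prime c_sub indep_m.
  by rewrite addn0; have := max_card (mem T); rewrite card_ord.
have [j jT indep_j] := alg_indep_mod_extend (c_prime _ (leqnSn m)) (c_prime _ (leqnn _))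
  (c_sub _ (ltnSn m)) indep_m.
have := IH (j |: T) (fun i im => c_prime i (leqW im)) (fun i im => c_sub i (ltnW im)) indep_j.
by rewrite cardsU1 jT addnS.
Qed.

End Dimension.

Section VariableIdeals.
Variables (k : fieldType) (n : nat).
Local Notation R := {mpoly k[n]}.
Implicit Types (C : {set 'I_n}) (p : R).

(* The ideal generated by the variables x_i, i in C. *)
Definition Xideal C p : Prop := restrX (~: C) p = 0.

Lemma mpolyX_neq0 i : 'X_i != 0 :> R.
Proof.
apply/eqP => /(congr1 (mcoeff U_(i))).
by rewrite mcoeffX eqxx mcoeff0 => /eqP; rewrite oner_eq0.
Qed.

Lemma Xideal_prime C : is_prime (Xideal C).
Proof.
rewrite /Xideal; split; [split; [|split] | split].
- exact: rmorph0.
- by move=> a b; rewrite rmorphD => -> ->; rewrite addr0.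
- by move=> r a; rewrite rmorphM => ->; rewrite mulr0.
- by rewrite rmorph1; apply/eqP; exact: oner_neq0.
- by move=> a b; rewrite rmorphM => /eqP; rewrite mulf_eq0 => /orP [] /eqP; [left|right].
Qed.

Lemma XidealX C i : Xideal C 'X_i <-> i \in C.
Proof.
rewrite /Xideal restrXX in_setC; case: (i \in C) => //=; split=> // X_eq0.
by have := mpolyX_neq0 i; rewrite X_eq0 eqxx.
Qed.

Lemma Xideal_min C (J : R -> Prop) : is_ideal J ->
  (forall i, i \in C -> J 'X_i) -> rsubset (Xideal C) J.
Proof.
move=> idJ JX p Cp; have := idealB_restrX idJ (T := ~: C) _ p.
by rewrite (Cp : restrX _ p = 0) subr0; apply=> i; rewrite in_setC negbK; apply: JX.
Qed.

Lemma Xideal_sub C C' : C \subset C' -> rsubset (Xideal C) (Xideal C').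
Proof.
move=> sCC'; apply: Xideal_min; first by case: (Xideal_prime C').
by move=> i /(subsetP sCC') /XidealX.
Qed.

Lemma prime_chain_Xideal_card C (P : R -> Prop) m :
  rseteq P (Xideal C) -> prime_chain_to P m -> (m <= #|C|)%N.
Proof.
move=> PC [c [c_prime [c_sub c_P]]].
have indep : alg_indep_mod (c m) (~: C) by move=> p p_fix /c_P /PC; rewrite /Xideal p_fix.
have := prime_chain_card c_prime c_sub indep; have := cardsC C; rewrite card_ord; lia.
Qed.

Lemma prime_chain_to_Xideal C : prime_chain_to (Xideal C) #|C|.
Proof.
pose e := enum C; have size_e : size e = #|C| by rewrite cardE.
exists (fun t => Xideal [set x in take t e]); split; first by move=> t _; apply: Xideal_prime.
split; last by rewrite -size_e take_size set_enum.
move=> t t_lt; have x0 := enum_val (Ordinal t_lt); rewrite -size_e in t_lt.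
have take_S : take t.+1 e = rcons (take t e) (nth x0 e t) by rewrite (take_nth x0 t_lt).
have x_new : nth x0 e t \notin take t e.
  by rewrite in_take ?mem_nth // index_uniq ?enum_uniq ?ltnn.
split.
  by apply: Xideal_sub; apply/subsetP => x; rewrite !inE take_S mem_rcons inE orbC => ->.
exists 'X_(nth x0 e t); split; apply/XidealX; rewrite inE ?(negbTE x_new) //.
by rewrite take_S mem_rcons mem_head.
Qed.

Lemma height_Xideal C : height_eq (Xideal C) #|C|.
Proof.
split; first exact: prime_chain_to_Xideal.
by move=> m; apply: prime_chain_Xideal_card.
Qed.

End VariableIdeals.

Definition vcover n (C : {set 'I_n}) := forall i j, L2_edge n i j -> i \in C \/ j \in C.

Definition min_vcover n (C : {set 'I_n}) :=
  vcover C /\ forall C' : {set 'I_n}, C' \subset C -> vcover C' -> C \subset C'.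

Section MinimalPrimes.
Variables (k : fieldType) (n : nat).
Local Notation R := {mpoly k[n]}.
Local Notation I := (edge_ideal_L2 k n).
Implicit Types (C : {set 'I_n}) (P : R -> Prop).

Lemma edge_idealX i j : L2_edge n i j -> I ('X_i * 'X_j).
Proof. by move=> ij J _ J_gen; apply: J_gen; exists i, j. Qed.

Lemma edge_ideal_min (J : R -> Prop) : is_ideal J ->
  (forall i j, L2_edge n i j -> J ('X_i * 'X_j)) -> rsubset I J.
Proof. by move=> idJ JX p Ip; apply: Ip => // _ [i [j [ij ->]]]; apply: JX. Qed.

Lemma edge_ideal_sub_Xideal C : vcover C -> rsubset I (Xideal C).
Proof.
move=> coverC; have [idC _] := Xideal_prime k C; apply: edge_ideal_min => // i j ij.
by case: (coverC i j ij) => /XidealX Ci; [apply: is_idealMr | apply: is_idealM].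
Qed.

Definition Xset (P : R -> Prop) : {set 'I_n} := [set i | propb (P 'X_i)].

Lemma Xideal_Xset_sub P C : is_prime P -> C \subset Xset P -> rsubset (Xideal C) P.
Proof.
move=> [idP _] sCP; apply: Xideal_min => // i /(subsetP sCP).
by rewrite inE => /propbP.
Qed.

Lemma vcover_Xset P : is_prime P -> rsubset I P -> vcover (Xset P).
Proof.
move=> [_ [_ P_mul]] IP i j /edge_idealX /IP /P_mul.
by rewrite !inE => -[] /propbP ->; [left | right].
Qed.

Lemma minimal_prime_Xideal P : is_minimal_prime I P ->
  exists2 C, min_vcover C & rseteq P (Xideal C).
Proof.
move=> [primeP [IP P_min]]; pose C := Xset P.
have Xideal_eq C' : C' \subset C -> vcover C' -> rseteq (Xideal C') P.
  move=> sC'C coverC'; apply: P_min; first exact: Xideal_prime.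
    exact: edge_ideal_sub_Xideal.
  exact: Xideal_Xset_sub.
have coverC := vcover_Xset primeP IP.
exists C; last by move=> p; rewrite (Xideal_eq C (subxx _) coverC).
split=> // C' sC'C coverC'; apply/subsetP => i; rewrite inE => /propbP Pi.
by apply/XidealX; apply/(Xideal_eq C' sC'C coverC').
Qed.

Lemma min_vcover_minimal_prime C : min_vcover C -> is_minimal_prime I (Xideal C).
Proof.
move=> [coverC C_min]; split; first exact: Xideal_prime.
split; first exact: edge_ideal_sub_Xideal.
move=> Q primeQ IQ QC p; split; first exact: QC.
have sXC : Xset Q \subset C.
  by apply/subsetP => i; rewrite inE => /propbP /QC /XidealX.
have := C_min _ sXC (vcover_Xset primeQ IQ).
by move=> /(Xideal_Xset_sub primeQ); apply.
Qed.

End MinimalPrimes.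

Local Close Scope ring_scope.

Definition near (i j : nat) : bool := (i <= j + 2) && (j <= i + 2).

Lemma L2_edge_near n (i j : 'I_n) : L2_edge n i j -> i != j /\ near i j.
Proof. by case: i j => [i ?] [j ?]; rewrite /L2_edge /near -val_eqE /=; lia. Qed.

Lemma near_L2_edge n (i j : 'I_n) : i != j -> near i j -> L2_edge n i j \/ L2_edge n j i.
Proof. by case: i j => [i ?] [j ?]; rewrite /L2_edge /near -val_eqE /=; lia. Qed.

Lemma min_vcover_dominating n (C : {set 'I_n}) : min_vcover C ->
  forall x : 'I_n, exists2 a : 'I_n, a \notin C & near x a.
Proof.
move=> [coverC C_min] x; case: (boolP (x \in C)) => xC; last by exists x; rewrite /near; lia.
case: (pickP [pred a | (a \notin C) && near x a]) => [a /andP [] | no_a]; first by exists a.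
have nbr_in (y : 'I_n) : near x y -> y \in C.
  by move=> xy; move: (no_a y); rewrite /= xy andbT => /negbFE.
suff: vcover (C :\ x) by move=> /(C_min _ (subD1set C x)) /subsetP /(_ x xC); rewrite !inE eqxx.
move=> i j ij; have [i_neq_j ij_near] := L2_edge_near ij; rewrite !inE.
have [i_x | i_neq_x] := eqVneq i x; first by subst i; right; rewrite eq_sym i_neq_j nbr_in.
have [j_x | j_neq_x] := eqVneq j x.
  by subst j; left; rewrite nbr_in // /near; move: ij_near; rewrite /near; lia.
by case: (coverC i j ij) => ->; [left | right].
Qed.

Lemma card_near n (a : 'I_n) : #|[set x : 'I_n | near x a]| <= 5.
Proof.
rewrite cardE -(size_map val) -[5](size_iota (a - 2)).
apply: uniq_leq_size; first by rewrite map_inj_uniq ?enum_uniq //; apply: val_inj.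
by move=> y /mapP [x]; rewrite mem_enum inE /near => x_near ->; rewrite mem_iota /=; lia.
Qed.

Lemma min_vcover_card n (C : {set 'I_n}) : min_vcover C -> #|C| <= n - (n + 4) %/ 5.
Proof.
move=> minC; pose N a := [set x : 'I_n | near x a].
have N_cover : \bigcup_(a in ~: C) N a = setT.
  apply/setP => x; rewrite inE; have [a aC xa] := min_vcover_dominating minC x.
  by apply/bigcupP; exists a; rewrite ?inE.
have card_cover : #|\bigcup_(a in ~: C) N a| <= \sum_(a in ~: C) #|N a|.
  elim/big_rec2: _ => [|a m U _ IH]; first by rewrite cards0.
  by rewrite (leq_trans (leq_card_setU _ _).1) ?leq_add2l.
have card_N : \sum_(a in ~: C) #|N a| <= #|~: C| * 5.
  by rewrite -sum_nat_const; apply: leq_sum => a _; apply: card_near.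
by move: (leq_trans card_cover card_N) (cardsC C); rewrite N_cover cardsT card_ord; lia.
Qed.

(* An independent dominating set of L_n^2 of size ceil(n/5). *)
Definition spread (n i : nat) : bool :=
  (i %% 5 == 2) || ((n %% 5 == 1) || (n %% 5 == 2)) && (i == n - 1).

Lemma spread_indep n (i j : 'I_n) : L2_edge n i j -> ~~ (spread n i && spread n j).
Proof. by case: i j => [i ?] [j ?]; rewrite /L2_edge /spread /=; lia. Qed.

Lemma spread_dominating n x : x < n -> exists2 a, (a < n) && spread n a & near x a.
Proof.
move=> xn; rewrite /spread /near; have [small|] := ltnP (5 * (x %/ 5) + 2) n.
  by exists (5 * (x %/ 5) + 2); apply/andP; split; lia.
by exists (n - 1); apply/andP; split; lia.
Qed.

Lemma sum_spread n m : m <= n ->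
  \sum_(i < m) spread n i = (m + 2) %/ 5 + ((n %% 5 == 1) || (n %% 5 == 2)) && (n <= m).
Proof.
elim: m => [|m IH] mn; first by rewrite big_ord0; case: n mn => [|n'] _; rewrite ?andbF.
rewrite big_ord_recr /= IH ?(ltnW mn) //.
have -> : (n <= m) = false by apply/negbTE; rewrite -ltnNge.
have -> : (n <= m.+1) = (m == n - 1) by apply/idP/eqP; lia.
rewrite /spread.
case: (m %% 5 =P 2) => ?; case: (n %% 5 =P 1) => ?; case: (n %% 5 =P 2) => ?;
  case: (m =P n - 1) => ?; rewrite /= ?andbF ?addn0; lia.
Qed.

Lemma card_spread n : #|[set i : 'I_n | spread n i]| = (n + 4) %/ 5.
Proof.
rewrite -sum1_card big_mkcond /= (eq_bigr (fun i : 'I_n => spread n i : nat)).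
  by rewrite sum_spread // leqnn andbT; case: (n %% 5 =P 1); case: (n %% 5 =P 2); lia.
by move=> i _; rewrite inE; case: spread.
Qed.

Lemma exists_min_vcover n :
  exists2 C : {set 'I_n}, min_vcover C & #|C| = n - (n + 4) %/ 5.
Proof.
pose A := [set i : 'I_n | spread n i]; exists (~: A); last first.
  by rewrite cardsCs setCK card_ord /A card_spread.
split.
  by move=> i j ij; rewrite !inE; apply/orP; rewrite -negb_and; apply: spread_indep.
move=> C' sC' coverC'; apply/subsetP => x; rewrite inE => xA.
have [a /andP [an Aa] xa] := spread_dominating (ltn_ord x); pose a' := Ordinal an.
have a'C' : a' \notin C'.
  by apply: contraL Aa => /(subsetP sC'); rewrite !inE => nAa; exact: nAa.
have x_neq_a : x != a' by apply: contraNneq xA => ->; rewrite inE.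
by case: (near_L2_edge x_neq_a xa) => /coverC' []; rewrite ?(negbTE a'C').
Qed.

Theorem corollary4p5 (k : fieldType) (n : nat) :
  (3 <= n)%N ->
  bigheight_eq (edge_ideal_L2 k n) (n - (n + 4) %/ 5)%N.
Proof.
(* The formula holds for every n. *)
move=> _.
have [C0 minC0 card_C0] := exists_min_vcover n.
split.
  exists (Xideal C0); split; first exact: min_vcover_minimal_prime.
  by rewrite -card_C0; apply: height_Xideal.
move=> P m /minimal_prime_Xideal [C minC PC] chain.
exact: leq_trans (prime_chain_Xideal_card PC chain) (min_vcover_card minC).
Qed.
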